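(* Let $\mathcal N$ be a network and $T\ge1$. For every $k\ge1$, every element of $\mathcal P_k^*$ is a path of length $k$ in $\mathcal G_k$.
   Context: A network is a triple $\mathcal N=(\mathcal L,\mathcal I,D_{\mathcal L})$ where $\mathcal L$ is a finite nonempty set of links, each $\mathcal I(l)$ is a collection of nonempty subsets of $\mathcal L$, and $D_{\mathcal L}$ assigns an integer $D_{\mathcal L}(l,l')$ to every pair with $l'\in\phi$ for some $\phi\in\mathcal I(l)$. A schedule is a map $S:\mathcal L\times\mathbb Z\to\{0,1\}$; $S(l,t)$ has a collision if there is $\phi\in\mathcal I(l)$ with $S(l',t+D_{\mathcal L}(l,l'))=1$ for all $l'\in\phi$; $S$ is collision free if no $(l,t)$ with $S(l,t)=1$ has a collision. $S[T,k]$ is the $|\mathcal L|\times T$ binary matrix with $S[T,k](l,j)=S(l,kT+j)$. The scheduling graph $(\mathcal M_T,\mathcal E_T)$ has vertex set $\mathcal M_T$ = all $|\mathcal L|\times T$ binary matrices $A$ with $A=S[T,0]$ for some collision-free $S$, and edge set $\mathcal E_T$ = all pairs $(A,B)$ with $A=S[T,0]$, $B=S[T,1]$ for some collision-free $S$. A path of length $k$ is a sequence $(A_0,\dots,A_k)$ with $(A_i,A_{i+1})\in\mathcal E_T$ for all $i$. Sequences of matrices of equal length are compared entrywise: $(A_0,\dots,A_k)\succcurlyeq(B_0,\dots,B_k)$ iff $A_i\succcurlyeq B_i$ entrywise for all $i$; $\succ$ means $\succcurlyeq$ and $\neq$. $\mathcal P_k^*$ is the set of paths of length $k$ in $(\mathcal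 M_T,\mathcal E_T)$ not strictly dominated ($\prec$) by any other path of length $k$. $\mathcal E^*$ is the set of maximal elements of $\mathcal E_T$ under this order on pairs; $\mathcal M_L^*=\{B:(B,B')\in\mathcal E^*\text{ for some }B'\}$, $\mathcal M_R^*=\{B:(B',B)\in\mathcal E^*\text{ for some }B'\}$. $A\wedge B$ is the entrywise AND of binary matrices, and $\mathcal V=\{B\wedge B': B\in\mathcal M_R^*, B'\in\mathcal M_L^*\}$. Define recursively $\mathcal U'_0=\mathcal E^*$ and, for $k\ge2$ (with $\mathcal U'_{k-2}$ already defined): $\mathcal F_k=\{(A,B\wedge B',C):(A,B)\in\mathcal U'_{k-2},(B',C)\in\mathcal E^*\}$; $\mathcal F_k^*=\{(A,B,C)\in\mathcal F_k:\text{there is no }(A,B',C)\in\mathcal F_k\text{ with }B'\succ B\}$; $\mathcal U_{k-2}=\{(A,B):(A,B,C)\in\mathcal F_k^*\text{ for some }C\}$; $\mathcal U'_{k-1}=\{(B,C):(A,B,C)\in\mathcal F_k^*\text{ for some }A\}$. A sequence $(P_0,\dots,P_k)$ is a path of length $k$ in $\mathcal G_k$ if: for $k=1$, $(P_0,P_1)\in\mathcal E^*$; for $k\ge2$, $P_0\in\mathcal M_L^*$, $P_1,\dots,P_{k-1}\in\mathcal V$, $P_k\in\mathcal M_R^*$, $(P_i,P_{i+1})\in\mathcal U_i$ for $0\le i\le k-2$, and $(P_{k-1},P_k)\in\mathcal U'_{k-1}$. *)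

From mathcomp Require Import all_boot all_order all_algebra.
Set Implicit Arguments. Unset Strict Implicit. Unset Printing Implicit Defensive.
Import GRing.Theory.
Local Open Scope ring_scope.

(* A network (L, I, D): links form a finite type [L]; [I l] is a collection
   of (nonempty) subsets of links; [D l l'] is an integer delay (only its
   values on pairs with l' in some phi in I l are ever used). *)
Section Scheduling.
Variables (L : finType) (I : L -> {set {set L}}) (D : L -> L -> int) (T : nat).

Definition schedule := L -> int -> bool.

Definition collision (S : schedule) (l : L) (t : int) : Prop :=
  exists2 phi, phi \in I l & forall l', l' \in phi -> S l' (t + D l l').

Definition collision_free (S : schedule) : Prop :=
  forall l t, S l t -> ~ collision S l t.

Definition mat := {ffun L * 'I_T -> bool}.

Definition window (S : schedule) (k : int) : mat :=
  [ffun x => S x.1 (k * (T%:Z) + (nat_of_ord x.2)%:Z)].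

Definition M_T (A : mat) : Prop :=
  exists S, collision_free S /\ A = window S 0.
Definition E_T (A B : mat) : Prop :=
  exists S, [/\ collision_free S, A = window S 0 & B = window S 1].

Definition mle (A B : mat) : Prop := forall x, A x -> B x.
Definition mlt (A B : mat) : Prop := mle A B /\ A <> B.
Definition mand (A B : mat) : mat := [ffun x => A x && B x].

(* paths of length k: sequences P_0..P_k, represented as functions nat -> mat
   of which only indices 0..k are relevant *)
Definition is_path (k : nat) (P : nat -> mat) : Prop :=
  forall i, (i < k)%N -> E_T (P i) (P i.+1).
Definition seq_le (k : nat) (P Q : nat -> mat) : Prop :=
  forall i, (i <= k)%N -> mle (P i) (Q i).
Definition seq_lt (k : nat) (P Q : nat -> mat) : Prop :=
  seq_le k P Q /\ exists2 i, (i <= k)%N & P i <> Q i.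

Definition Pstar (k : nat) (P : nat -> mat) : Prop :=
  is_path k P /\ ~ exists Q, is_path k Q /\ seq_lt k P Q.

Definition pair_lt (A B A' B' : mat) : Prop :=
  mle A A' /\ mle B B' /\ (A, B) <> (A', B').
Definition Estar (A B : mat) : Prop :=
  E_T A B /\ ~ exists A' B', E_T A' B' /\ pair_lt A B A' B'.

Definition ML_star (B : mat) : Prop := exists B', Estar B B'.
Definition MR_star (B : mat) : Prop := exists B', Estar B' B.
Definition Vset (P : mat) : Prop :=
  exists B B', [/\ MR_star B, ML_star B' & P = mand B B'].

(* F_k built from U'_{k-2} *)
Definition F_of (U : mat -> mat -> Prop) (A B C : mat) : Prop :=
  exists B1 B2, [/\ U A B1, Estar B2 C & B = mand B1 B2].
Definition Fstar_of (U : mat -> mat -> Prop) (A B C : mat) : Prop :=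
  F_of U A B C /\ ~ exists B', F_of U A B' C /\ mlt B B'.

(* Uprime n = U'_n ; U'_0 = E^*, U'_{k-1} from F_k^* (k >= 2) *)
Fixpoint Uprime (n : nat) : mat -> mat -> Prop :=
  match n with
  | 0 => Estar
  | n'.+1 => fun B C => exists A, Fstar_of (Uprime n') A B C
  end.
(* Useq n = U_n, obtained from F_{n+2}^* *)
Definition Useq (n : nat) (A B : mat) : Prop :=
  exists C, Fstar_of (Uprime n) A B C.

Definition path_G (k : nat) (P : nat -> mat) : Prop :=
  if k == 1%N then Estar (P 0%N) (P 1%N)
  else [/\ ML_star (P 0%N),
           forall i, (1 <= i)%N -> (i <= k.-1)%N -> Vset (P i),
           MR_star (P k),
           forall i, (i <= k - 2)%N -> Useq i (P i) (P i.+1)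
         & Uprime k.-1 (P k.-1) (P k)].

End Scheduling.

From mathcomp Require Import all_boot all_order all_algebra.
From mathcomp Require Import zify.
From Stdlib Require Import Classical.
Set Implicit Arguments. Unset Strict Implicit. Unset Printing Implicit Defensive.
Import GRing.Theory.
Local Open Scope ring_scope.

(* The proof rests on two facts about the scheduling graph.
   (1) Edges are closed downwards: switching off transmissions of a
       collision-free schedule keeps it collision free, so if (A, B) is an
       edge then so is every entrywise smaller pair (A', B').
   (2) Matrices are finite, so every edge lies below a maximal edge in E^*,
       and every element of F_k lies below an element of F_k^* with the same
       endpoints; both follow from a generic "maximal element above" lemma
       with the number of ones as a bounded strictly increasing measure.
   For a dominant path P, these give a rigidity principle: if one entry P_i
   can be enlarged to N while still forming edges with its neighbours, then
   N = P_i.  Applying (2) to the edges of P and rigidity at each enlarged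
   entry identifies P_0 with a left end of E^*, P_k with a right end, every
   inner P_i with a meet of a right and a left end, and, by induction along
   the path, the pairs (P_i, P_{i+1}) with members of U_i and U'_{k-1}. *)

Lemma exists_maximal_above (X : Type) (le lt : X -> X -> Prop)
    (f : X -> nat) (N : nat) :
  (forall x y z, le x y -> le y z -> le x z) -> (forall x, le x x) ->
  (forall x y, lt x y -> le x y) -> (forall x y, lt x y -> (f x < f y)%N) ->
  (forall x, (f x <= N)%N) ->
  forall (Q : X -> Prop) x, Q x ->
  exists y, [/\ Q y, le x y & ~ exists z, Q z /\ lt y z].
Proof.
move=> le_trans le_refl lt_le f_mono f_bound Q.
suff gap : forall n x, (N - f x <= n)%N -> Q x ->
    exists y, [/\ Q y, le x y & ~ exists z, Q z /\ lt y z].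
  by move=> x; apply: gap (leqnn _).
elim=> [|n IH] x gap_x Qx.
  exists x; split=> // -[z [_ /f_mono lt_xz]].
  by have := f_bound z; lia.
have [[z [Qz lt_xz]]|x_max] := classic (exists z, Q z /\ lt x z); last first.
  by exists x.
have gap_z : (N - f z <= n)%N by have := f_mono _ _ lt_xz; have := f_bound z; lia.
have [y [Qy le_zy y_max]] := IH z gap_z Qz.
by exists y; split=> //; apply: le_trans (lt_le _ _ lt_xz) le_zy.
Qed.

Section Network.
Variables (L : finType) (I : L -> {set {set L}}) (D : L -> L -> int) (T : nat).
Local Notation mat := (mat L T).
Local Notation schedule := (schedule L).
Local Notation window := (window T).
Local Notation E := (E_T I D).
Local Notation Estar := (Estar I D).
Local Notation Uprime := (Uprime I D).

Lemma mle_refl (A : mat) : mle A A.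
Proof. by []. Qed.

Lemma mle_trans (A B C : mat) : mle A B -> mle B C -> mle A C.
Proof. by move=> AB BC x /AB /BC. Qed.

Lemma mand_l (A B : mat) : mle (mand A B) A.
Proof. by move=> x; rewrite ffunE => /andP[]. Qed.

Lemma mand_r (A B : mat) : mle (mand A B) B.
Proof. by move=> x; rewrite ffunE => /andP[]. Qed.

Lemma mand_glb (A B C : mat) : mle C A -> mle C B -> mle C (mand A B).
Proof. by move=> CA CB x Cx; rewrite ffunE CA ?CB. Qed.

Lemma mand_absorb (A B : mat) : mle A B -> mand B A = A.
Proof. by move=> AB; apply/ffunP=> x; rewrite ffunE; case Ax: (A x); rewrite ?andbF ?(AB x Ax). Qed.

Definition ones (A : mat) : nat := #|[set x | A x]|.

Lemma ones_le (A B : mat) : mle A B -> (ones A <= ones B)%N.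
Proof. by move=> AB; apply: subset_leq_card; apply/subsetP=> x; rewrite !inE; apply: AB. Qed.

Lemma ones_lt (A B : mat) : mlt A B -> (ones A < ones B)%N.
Proof.
move=> [AB neqAB]; apply: proper_card; rewrite properE; apply/andP; split.
  by apply/subsetP=> x; rewrite !inE; apply: AB.
apply/subsetP=> BA; apply: neqAB; apply/ffunP=> x; apply/idP/idP; first exact: AB.
by move=> Bx; have := BA x; rewrite !inE; apply.
Qed.

Lemma ones_bound (A : mat) : (ones A <= #|{: L * 'I_T}|)%N.
Proof. exact: max_card. Qed.

Lemma pair_lt_ones (A B A' B' : mat) :
  pair_lt A B A' B' -> (ones A + ones B < ones A' + ones B')%N.
Proof.
move=> [AA' [BB' neq]]; have := ones_le AA'; have := ones_le BB'.
have [eqA|neqA] := eqVneq A A'.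
  have neqB : B <> B' by move=> eqB; apply: neq; rewrite eqA eqB.
  by have := ones_lt (conj BB' neqB); lia.
by have := ones_lt (conj AA' (elimN eqP neqA)); lia.
Qed.

Lemma collision_free_sub (S S' : schedule) :
  (forall l t, S' l t -> S l t) -> collision_free I D S -> collision_free I D S'.
Proof.
move=> sub cfS l t /sub St [phi phiI hphi]; apply: (cfS l t St).
by exists phi => // l' /hphi /sub.
Qed.

(* The schedule equal to A on the first window, to B on the second one, and
   transmitting everywhere else; used as a mask. *)
Definition frame (A B : mat) : schedule := fun l t =>
  [forall j : 'I_T, (t == Posz j) ==> A (l, j)] &&
  [forall j : 'I_T, (t == Posz (T + j)) ==> B (l, j)].

Lemma window_frame0 (A B : mat) : window (frame A B) 0 = A.
Proof.
apply/ffunP=> -[l j]; rewrite ffunE /= mul0r add0r /frame.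
apply/andP/idP=> [[/forallP/(_ j)] | Aj]; first by rewrite eqxx.
split; apply/forallP=> j'; apply/implyP; rewrite eqz_nat.
  by move=> /eqP/ord_inj <-.
by move=> /eqP; have := ltn_ord j; lia.
Qed.

Lemma window_frame1 (A B : mat) : window (frame A B) 1 = B.
Proof.
apply/ffunP=> -[l j]; rewrite ffunE /= mul1r -PoszD /frame.
apply/andP/idP=> [[_ /forallP/(_ j)] | Bj]; first by rewrite eqxx.
split; apply/forallP=> j'; apply/implyP; rewrite eqz_nat.
  by move=> /eqP; have := ltn_ord j'; lia.
by move=> /eqP/addnI/ord_inj <-.
Qed.

Lemma window_and (S S' : schedule) (k : int) :
  window (fun l t => S l t && S' l t) k = mand (window S k) (window S' k).
Proof. by apply/ffunP=> x; rewrite !ffunE. Qed.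

Lemma edge_sub (A B A' B' : mat) : E A B -> mle A' A -> mle B' B -> E A' B'.
Proof.
case=> S [cfS -> ->] A'A B'B.
exists (fun l t => S l t && frame A' B' l t); split.
- by apply: collision_free_sub cfS => l t /andP[].
- by rewrite window_and window_frame0 mand_absorb.
- by rewrite window_and window_frame1 mand_absorb.
Qed.

Lemma Estar_edge (A B : mat) : Estar A B -> E A B.
Proof. by case. Qed.

Lemma Estar_above (A B : mat) : E A B ->
  exists A' B', [/\ Estar A' B', mle A A' & mle B B'].
Proof.
move=> EAB.
have [[A' B'] [/= EA'B' [AA' BB'] maximal]] :=
  @exists_maximal_above (mat * mat)
    (fun p q => mle p.1 q.1 /\ mle p.2 q.2) (fun p q => pair_lt p.1 p.2 q.1 q.2)
    (fun p => ones p.1 + ones p.2) (#|{: L * 'I_T}| + #|{: L * 'I_T}|)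
    (fun p q r '(conj pq1 pq2) '(conj qr1 qr2) => conj (mle_trans pq1 qr1) (mle_trans pq2 qr2))
    (fun p => conj (@mle_refl p.1) (@mle_refl p.2))
    (fun p q '(conj h1 (conj h2 _)) => conj h1 h2)
    (fun p q => @pair_lt_ones p.1 p.2 q.1 q.2)
    (fun p => leq_add (ones_bound p.1) (ones_bound p.2))
    (fun p => E p.1 p.2) (A, B) EAB.
exists A', B'; split=> //; split=> // -[A'' [B'' [EA''B'' lt'']]].
by apply: maximal; exists (A'', B'').
Qed.

Lemma F_of_edges (U : mat -> mat -> Prop) (A B C : mat) :
  (forall X Y, U X Y -> E X Y) -> F_of I D U A B C -> E A B /\ E B C.
Proof.
move=> U_edge [B1 [B2 [UAB1 EB2C ->]]]; split.
  exact: edge_sub (U_edge _ _ UAB1) (@mle_refl _) (@mand_l _ _).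
exact: edge_sub (Estar_edge EB2C) (@mand_r _ _) (@mle_refl _).
Qed.

Lemma Uprime_edge n (A B : mat) : Uprime n A B -> E A B.
Proof.
elim: n A B => [|n IH] A B; first exact: Estar_edge.
by move=> [A0 [/(F_of_edges IH) [_ EAB] _]].
Qed.

Lemma Fstar_above (U : mat -> mat -> Prop) (A B C : mat) : F_of I D U A B C ->
  exists B', Fstar_of I D U A B' C /\ mle B B'.
Proof.
move=> FABC.
have [B' [FAB'C BB' maximal]] :=
  @exists_maximal_above mat (@mle L T) (@mlt L T) ones #|{: L * 'I_T}|
    (@mle_trans) (@mle_refl) (fun _ _ lt_xy => proj1 lt_xy) (@ones_lt) (@ones_bound)
    (fun X => F_of I D U A X C) B FABC.
by exists B'.
Qed.

Section DominantPath.
Variables (k : nat) (P : nat -> mat).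
Hypothesis P_dominant : Pstar I D k P.

Let P_path : is_path I D k P := proj1 P_dominant.

Lemma Pstar_rigid i (N : mat) : (i <= k)%N -> mle (P i) N ->
  ((0 < i)%N -> E (P i.-1) N) -> ((i < k)%N -> E N (P i.+1)) -> N = P i.
Proof.
move=> ik PN E_left E_right; case: (eqVneq N (P i)) => // neqN.
case: P_dominant => _ []; pose Q j := if j == i then N else P j.
exists Q; split.
  move=> j jk; rewrite /Q; have [eq_ji|neq_ji] := eqVneq j i.
    by subst j; rewrite gtn_eqF //; apply: E_right.
  by have [eq_j1|_] := eqVneq j.+1 i; [subst i; apply: E_left | apply: P_path].
split; first by move=> j _; rewrite /Q; case: eqP => [->|_].
by exists i => //; rewrite /Q eqxx => eqP_N; rewrite eqP_N eqxx in neqN.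
Qed.

Lemma Pstar_first : (0 < k)%N -> exists B, Estar (P 0) B /\ mle (P 1) B.
Proof.
move=> k_gt0; have [A [B [EAB PA PB]]] := Estar_above (P_path k_gt0).
have eqA : A = P 0.
  apply: Pstar_rigid => // _.
  exact: edge_sub (Estar_edge EAB) (@mle_refl _) PB.
by exists B; rewrite -eqA.
Qed.

Lemma Pstar_last : (0 < k)%N -> exists A, Estar A (P k) /\ mle (P k.-1) A.
Proof.
move=> k_gt0; have := @P_path k.-1; rewrite ltn_predL prednK // => /(_ k_gt0).
move=> /Estar_above [A [B [EAB PA PB]]].
have eqB : B = P k.
  apply: Pstar_rigid => //; last by rewrite ltnn.
  move=> _; exact: edge_sub (Estar_edge EAB) PA (@mle_refl _).
by exists A; rewrite -eqB.
Qed.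

Lemma Pstar_inner i : (0 < i)%N -> (i < k)%N -> Vset I D (P i).
Proof.
case: i => // i _ ik.
have [A [B [EAB PA PB]]] := Estar_above (P_path (ltnW ik)).
have [B' [C [EB'C PB' PC]]] := Estar_above (P_path ik).
have eq_meet : mand B B' = P i.+1.
  apply: Pstar_rigid; [exact: ltnW | exact: mand_glb | move=> _ | move=> _].
    exact: edge_sub (Estar_edge EAB) PA (@mand_l _ _).
  exact: edge_sub (Estar_edge EB'C) (@mand_r _ _) PC.
by exists B, B'; split; [exists A | exists C |].
Qed.

Lemma Pstar_Fstar n (X : mat) : (n.+2 <= k)%N ->
  Uprime n (P n) X -> mle (P n.+1) X ->
  exists C, Fstar_of I D (Uprime n) (P n) (P n.+1) C /\ mle (P n.+2) C.
Proof.
move=> nk UPX PX.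
have [B [C [EBC PB PC]]] := Estar_above (P_path nk).
have [B' [FB' le_B']] : exists B', Fstar_of I D (Uprime n) (P n) B' C /\
    mle (mand X B) B'.
  by apply: Fstar_above; exists X, B.
have eqB' : B' = P n.+1.
  have [E_left E_right] := F_of_edges (@Uprime_edge n) (proj1 FB').
  apply: Pstar_rigid; [exact: ltnW | | by [] | move=> _].
    exact: mle_trans (mand_glb PX PB) le_B'.
  exact: edge_sub E_right (@mle_refl _) PC.
by exists C; rewrite -eqB'.
Qed.

Lemma Pstar_Uprime n : (n < k)%N -> exists X, Uprime n (P n) X /\ mle (P n.+1) X.
Proof.
elim: n => [|n IH] nk; first exact: Pstar_first.
have [X [UPX PX]] := IH (ltnW nk).
have [C [FC PC]] := Pstar_Fstar nk UPX PX.
by exists C; split; first exists (P n).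
Qed.

Lemma Pstar_Useq i : (i.+2 <= k)%N -> Useq I D i (P i) (P i.+1).
Proof.
move=> ik; have [X [UPX PX]] := Pstar_Uprime (ltnW ik).
by have [C [FC _]] := Pstar_Fstar ik UPX PX; exists C.
Qed.

End DominantPath.
End Network.

Theorem lemma7 (L : finType) (I : L -> {set {set L}}) (D : L -> L -> int)
    (T : nat)
    (HL : (0 < #|L|)%N)
    (HI : forall l phi, phi \in I l -> phi != set0)
    (HT : (1 <= T)%N) :
  forall (k : nat), (1 <= k)%N ->
  forall P : nat -> mat L T, Pstar I D k P -> path_G I D k P.
Proof.
move=> k k_gt0 P P_dom; rewrite /path_G; case: eqP => [k1|k_neq1].
  subst k; have [B [EPB PB]] := Pstar_first P_dom k_gt0.
  have eqB : B = P 1%N by apply: (Pstar_rigid P_dom) => // _; apply: Estar_edge.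
  by rewrite -eqB.
split.
- by have [B [EPB _]] := Pstar_first P_dom k_gt0; exists B.
- by move=> i i_gt0 ik; apply: (Pstar_inner P_dom) => //; lia.
- by have [A [EAP _]] := Pstar_last P_dom k_gt0; exists A.
- by move=> i ik; apply: (Pstar_Useq P_dom); lia.
have k1_lt : (k.-1 < k)%N by rewrite ltn_predL.
have [X [UPX PX]] := Pstar_Uprime P_dom k1_lt.
rewrite prednK // in PX.
have eqX : X = P k.
  apply: (Pstar_rigid P_dom) => //; last by rewrite ltnn.
  by move=> _; apply: Uprime_edge UPX.
by rewrite -eqX.
Qed.
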